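(* Let $M,N\ge1$ be integers and let $f_0,\ldots,f_{K-1}$ be distinct functions $\mathbb{Z}_M\to\mathbb{Z}_N$. Define the $K\times K$ matrix $\Gamma$ by $\Gamma_{j'j}=\sum_{x\in\mathbb{Z}_M}\langle f_{j'}(x)|f_j(x)\rangle$, i.e. $\Gamma_{j'j}$ is the number of $x\in\mathbb{Z}_M$ with $f_{j'}(x)=f_j(x)$. Then the standard oracle operators $U_{f_0},\ldots,U_{f_{K-1}}$ are unambiguously distinguishable if and only if $\det\Gamma>0$. Moreover, when $M=N$ and all $f_j$ are permutations of $\mathbb{Z}_M$, the minimal oracle operators $Q_{f_0},\ldots,Q_{f_{K-1}}$ are unambiguously distinguishable if and only if $\det\Gamma>0$.
   Context: Let $\mathcal{H}_M,\mathcal{H}_N$ be Hilbert spaces with orthonormal computational bases $\{|x\rangle\}_{x\in\mathbb{Z}_M}$, $\{|y\rangle\}_{y\in\mathbb{Z}_N}$. For $f:\mathbb{Z}_M\to\mathbb{Z}_N$ the standard oracle operator is the unitary $U_f$ on $\mathcal{H}_M\otimes\mathcal{H}_N$ with $U_f|x\rangle\otimes|y\rangle=|x\rangle\otimes|y\oplus f(x)\rangle$, $\oplus$ being addition mod $N$. For a permutation $f$ of $\mathbb{Z}_M$, the minimal oracle operator is the unitary $Q_f$ on $\mathcal{H}_M$ with $Q_f|x\rangle=|f(x)\rangle$. A finite list of unitary operators $W_1,\ldots,W_K$ on a finite-dimensional Hilbert space $\mathcal{H}$ is called unambiguously distinguishable if there exist a finite-dimensional ancilla space $\mathcal{H}_A$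 and a unit vector $|\psi\rangle\in\mathcal{H}\otimes\mathcal{H}_A$ such that the vectors $(W_j\otimes\mathbb{1}_A)|\psi\rangle$ are linearly independent. *)

From HB Require Import structures.
From mathcomp Require Import all_boot all_order all_algebra.
From mathcomp Require Import complex mxtens.
From mathcomp Require Import reals.

Set Implicit Arguments.
Unset Strict Implicit.
Unset Printing Implicit Defensive.

Import Order.TTheory GRing.Theory Num.Theory.
Local Open Scope ring_scope.

(* Z_M is represented by 'I_M; the Hilbert space H_M is 'cV[R[i]]_M with
   computational basis |x> = delta_mx x 0.  The tensor product
   H_M (x) H_N is 'cV_(M * N) with |x> (x) |y> = |x> *t |y>  (Kronecker
   product from mathcomp real_closed mxtens), and operators on tensor
   products are Kronecker products  A *t B. *)

Lemma addmod_proof (N : nat) (y z : 'I_N) : ((y + z) %% N < N)%N.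
Proof. by rewrite ltn_pmod // (leq_ltn_trans (leq0n y) (ltn_ord y)). Qed.

Definition addmod (N : nat) (y z : 'I_N) : 'I_N := Ordinal (addmod_proof y z).

Section Defs.
Variable R : realType.
Local Notation C := R[i].

Definition ket (n : nat) (x : 'I_n) : 'cV[C]_n := delta_mx x 0.

Definition inner (n : nat) (u v : 'cV[C]_n) : C := \sum_(i < n) (u i 0)^* * v i 0.

Definition std_oracle (M N : nat) (f : 'I_M -> 'I_N) : 'M[C]_(M * N) :=
  \sum_(x < M) \sum_(y < N)
     (ket x *t ket (addmod y (f x))) *m (ket x *t ket y)^T.

Definition min_oracle (M : nat) (f : 'I_M -> 'I_M) : 'M[C]_M :=
  \sum_(x < M) ket (f x) *m (ket x)^T.

(* W_0, ..., W_{K-1} on a D-dimensional space are unambiguously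
   distinguishable: there are a finite-dimensional ancilla C^dA and a unit
   vector psi in C^D (x) C^dA such that the vectors (W_j (x) 1_A) psi are
   linearly independent (the K x (D*dA) matrix having them as rows is
   row-free). *)
Definition unamb_dist (D K : nat) (W : 'I_K -> 'M[C]_D) : Prop :=
  exists (dA : nat) (psi : 'cV[C]_(D * dA)),
    inner psi psi = 1 /\
    row_free (\matrix_(j < K) ((W j *t (1%:M : 'M[C]_dA)) *m psi)^T).

Definition Gamma (M N K : nat) (f : 'I_K -> 'I_M -> 'I_N) : 'M[C]_K :=
  \matrix_(j', j) \sum_(x < M) inner (ket (f j' x)) (ket (f j x)).

End Defs.

From HB Require Import structures.
From mathcomp Require Import all_boot all_order all_algebra.
From mathcomp Require Import complex mxtens.
From mathcomp Require Import reals.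
From mathcomp Require Import ring.

(* Let F be the K x MN matrix whose j-th row is the indicator vector of the
   graph {(x, f_j x)}.  Then Gamma = F F^*, so det Gamma > 0 iff the rows of F
   are linearly independent (Gram determinant, computed from a Gram-Schmidt
   factorisation F = T S with S S^* = 1).  Operators W_j are unambiguously
   distinguishable iff they are linearly independent: a linear relation among
   the W_j survives on the vectors (W_j (x) 1) psi, and on the maximally
   entangled state (W (x) 1) psi is, up to a scalar, the vectorisation of W.
   Finally, the linear relations among the U_{f_j} (resp. Q_{f_j}) are exactly
   those among the rows of F, since (U_f)_{(x,y'),(x,y)} = [f x = y' - y] and
   (Q_f)_{a,b} = [a = f b]. *)

Set Implicit Arguments.
Unset Strict Implicit.
Unset Printing Implicit Defensive.

Import Order.TTheory GRing.Theory Num.Theory.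
Local Open Scope ring_scope.

Lemma sum_mxtens (V : nmodType) m n (g : 'I_(m * n) -> V) :
  \sum_k g k = \sum_i \sum_j g (mxtens_index (i, j)).
Proof.
rewrite pair_bigA (reindex (@mxtens_index m n)) /=; last first.
  by exists (@mxtens_unindex m n) => k _; rewrite ?mxtens_indexK ?mxtens_unindexK.
by apply: eq_big => // -[].
Qed.

Lemma sumr_delta (R : pzSemiRingType) n (a : 'I_n) (g : 'I_n -> R) :
  \sum_i ((a == i)%:R * g i) = g a.
Proof.
rewrite (bigD1 a) //= eqxx mul1r big1 ?addr0 // => i.
by rewrite eq_sym => /negbTE ->; rewrite mul0r.
Qed.

Lemma tensmx_sumZl (R : pzRingType) K m n p q (c : 'I_K -> R)
    (W : 'I_K -> 'M[R]_(m, n)) (B : 'M[R]_(p, q)) :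
  (\sum_j c j *: W j) *t B = \sum_j c j *: (W j *t B).
Proof.
apply/matrixP => k l; rewrite mxE !summxE mulr_suml.
by apply: eq_bigr => j _; rewrite !mxE mulrA.
Qed.

Definition lin_indep {F : fieldType} {m n K : nat} (W : 'I_K -> 'M[F]_(m, n)) :=
  forall c : 'rV[F]_K, \sum_j c 0 j *: W j = 0 -> c = 0.

Lemma lin_indep_row_free (F : fieldType) m n K p
    (W : 'I_K -> 'M[F]_(m, n)) (A : 'M[F]_(K, p)) :
  (forall c : 'rV_K, \sum_j c 0 j *: W j = 0 <-> c *m A = 0) ->
  lin_indep W <-> row_free A.
Proof.
move=> relE; split => [indepW | freeA c /relE cA0].
  by apply/inj_row_free => c /relE /indepW.
by apply: (row_free_inj freeA); rewrite cA0 mul0mx.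
Qed.

Section Gram.
Variable C : numClosedFieldType.
Local Open Scope sesquilinear_scope.

Lemma det_gram_gt0 m n (X : 'M[C]_(m, n)) : (0 < \det (X *m X ^t* )) = row_free X.
Proof.
apply/idP/idP => [det_gt0 | freeX].
  apply/row_freeP; exists (X ^t* *m invmx (X *m X ^t* )).
  by rewrite mulmxA mulmxV // unitmxE unitfE lt0r_neq0.
have le_mn : (m <= n)%N by rewrite -(eqP freeX) rank_leq_col.
set S := schmidt X; set T := X *m pinvmx S.
have XE : T *m S = X := mulmxKpV (schmidt_sub X).
have gramE : X *m X ^t* = T *m T ^t*.
  rewrite -XE trmx_mul map_mxM !mulmxA -[T *m S *m _]mulmxA.
  by rewrite (unitarymxP (schmidt_unitarymx X le_mn)) mulmx1.
have unitT : T \in unitmx.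
  rewrite -row_full_unit /row_full eqn_leq rank_leq_row /=.
  by rewrite -{1}(eqP freeX) -{1}XE mxrankM_maxl.
rewrite gramE det_mulmx det_map_mx det_tr mul_conjC_gt0 -unitfE -unitmxE //.
Qed.

End Gram.

Section Unambiguous.
Variable R : realType.
Local Notation C := R[i].

Definition max_entangled D : 'cV[C]_(D * D) :=
  \col_k ((sqrtC D%:R)^-1 * ((mxtens_unindex k).1 == (mxtens_unindex k).2)%:R).

Lemma max_entangled_unit D : (0 < D)%N ->
  inner (max_entangled D) (max_entangled D) = 1.
Proof.
move=> D_gt0; set s : C := (sqrtC D%:R)^-1.
have s_ge0 : 0 <= s by rewrite invr_ge0 sqrtC_ge0 ler0n.
rewrite /inner sum_mxtens.
transitivity (\sum_(a < D) s ^+ 2).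
  apply: eq_bigr => a _.
  rewrite (eq_bigr (fun b => (a == b)%:R * s ^+ 2)) ?sumr_delta // => b _.
  rewrite !mxE mxtens_indexK /= rmorphM /= (geC0_conj s_ge0) conjC_nat.
  by rewrite -/s; case: eqP; rewrite ?mulr1 ?mul1r ?mulr0 ?mul0r ?expr2.
rewrite big_const_ord iter_addr_0 exprVn sqrtCK -[_^-1 *+ D]mulr_natr.
by rewrite mulVf // pnatr_eq0 -lt0n.
Qed.

Lemma tensmx1_max_entangled D (W : 'M[C]_D) a b :
  ((W *t 1%:M) *m max_entangled D) (mxtens_index (a, b)) 0 =
  (sqrtC D%:R)^-1 * W a b.
Proof.
set s : C := (sqrtC D%:R)^-1.
rewrite mxE sum_mxtens (eq_bigr (fun x => (b == x)%:R * (s * W a x))).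
  by rewrite sumr_delta.
move=> x _; rewrite (eq_bigr (fun y => (x == y)%:R * ((b == y)%:R * (s * W a x)))).
  by rewrite sumr_delta eq_sym.
by move=> y _; rewrite tensmxE !mxE mxtens_indexK /= -/s; ring.
Qed.

Theorem unamb_distP D K (W : 'I_K -> 'M[C]_D) : (0 < D)%N ->
  unamb_dist W <-> lin_indep W.
Proof.
move=> D_gt0; split => [[dA [psi [_ freeV]]] c Wc0 | indepW].
  apply: (row_free_inj freeV); rewrite mul0mx mulmx_sum_row.
  under eq_bigr do rewrite rowK -linearZ /= scalemxAl.
  by rewrite -linear_sum -mulmx_suml -tensmx_sumZl Wc0 tens0mx mul0mx linear0.
exists D, (max_entangled D); split; first exact: max_entangled_unit.
apply/inj_row_free => c cV0; apply: indepW; apply/matrixP => a b.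
rewrite summxE mxE; under eq_bigr do rewrite mxE.
have := congr1 (fun v : 'rV_(D * D) => v 0 (mxtens_index (a, b))) cV0.
rewrite !mxE (eq_bigr (fun j => (sqrtC D%:R)^-1 * (c 0 j * W j a b))) => [|j _].
  rewrite -mulr_sumr => /eqP; rewrite mulf_eq0 invr_eq0 sqrtC_eq0 pnatr_eq0.
  by rewrite gtn_eqF //= => /eqP.
by rewrite 2!mxE tensmx1_max_entangled mulrCA.
Qed.

End Unambiguous.

Lemma addmodE n (y z : 'I_n.+1) : addmod y z = y + z.
Proof. exact: val_inj. Qed.

Section Oracles.
Variable R : realType.
Local Notation C := R[i].
Local Open Scope sesquilinear_scope.

Lemma ketE n (x i : 'I_n) j : ket R x i j = (i == x)%:R.
Proof. by rewrite mxE [j]ord1 eqxx andbT. Qed.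

Lemma eq_mxtens_index m n (p q : 'I_m * 'I_n) :
  (mxtens_index p == mxtens_index q) = (p == q).
Proof. exact/inj_eq/can_inj/mxtens_indexK. Qed.

Lemma tensmx_ket m n (x : 'I_m) (y : 'I_n) :
  ket R x *t ket R y = ket R (mxtens_index (x, y)).
Proof.
apply/matrixP => k l.
case: (mxtens_indexP k) => a b; case: (mxtens_indexP l) => u v.
by rewrite tensmxE !ketE eq_mxtens_index xpair_eqE -natrM mulnb.
Qed.

Lemma ket_braE n m (u : 'I_n) (v : 'I_m) i j :
  (ket R u *m (ket R v)^T) i j = (i == u)%:R * (j == v)%:R.
Proof. by rewrite mxE big_ord1 [_^T _ _]mxE !ketE. Qed.

Lemma std_oracleE M N (g : 'I_M -> 'I_N) x' y' x y :
  std_oracle R g (mxtens_index (x', y')) (mxtens_index (x, y)) =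
  (x' == x)%:R * (y' == addmod y (g x))%:R.
Proof.
rewrite summxE (eq_bigr (fun x0 => (x == x0)%:R *
  ((x' == x0)%:R * (y' == addmod y (g x0))%:R))) ?sumr_delta // => x0 _.
rewrite summxE (eq_bigr (fun y0 => (y == y0)%:R *
  ((x == x0)%:R * ((x' == x0)%:R * (y' == addmod y0 (g x0))%:R))))
  ?sumr_delta // => y0 _.
rewrite !tensmx_ket ket_braE !eq_mxtens_index !xpair_eqE -!mulnb !natrM; ring.
Qed.

Lemma min_oracleE M (g : 'I_M -> 'I_M) a b : min_oracle R g a b = (a == g b)%:R.
Proof.
rewrite summxE (eq_bigr (fun x => (b == x)%:R * (a == g x)%:R)) ?sumr_delta // => x _.
by rewrite ket_braE mulrC.
Qed.

Definition graph_mx {M N K} (f : 'I_K -> 'I_M -> 'I_N) : 'M[C]_(K, M * N) :=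
  \matrix_(j, k) (f j (mxtens_unindex k).1 == (mxtens_unindex k).2)%:R.

Lemma graph_mxE M N K (f : 'I_K -> 'I_M -> 'I_N) j x y :
  graph_mx f j (mxtens_index (x, y)) = (f j x == y)%:R.
Proof. by rewrite mxE mxtens_indexK. Qed.

Lemma Gamma_graph_mx M N K (f : 'I_K -> 'I_M -> 'I_N) :
  Gamma R f = graph_mx f *m (graph_mx f)^t*.
Proof.
apply/matrixP => j' j; rewrite !mxE sum_mxtens; apply: eq_bigr => x _.
apply: eq_bigr => y _.
by rewrite !ketE [_^t* _ _]mxE [_^T _ _]mxE !graph_mxE !conjC_nat ![_ == f _ x]eq_sym.
Qed.

Lemma std_oracle_relations M N K (f : 'I_K -> 'I_M -> 'I_N) (c : 'rV[C]_K) :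
  (0 < N)%N -> \sum_j c 0 j *: std_oracle R (f j) = 0 <-> c *m graph_mx f = 0.
Proof.
case: N f => // n f _.
have relE x' y' x y : (\sum_j c 0 j *: std_oracle R (f j))
    (mxtens_index (x', y')) (mxtens_index (x, y)) =
  (x' == x)%:R * (c *m graph_mx f) 0 (mxtens_index (x, y' - y)).
  rewrite summxE [(c *m _) _ _]mxE mulr_sumr; apply: eq_bigr => j _.
  rewrite mxE std_oracleE graph_mxE addmodE.
  by rewrite [f j x == _]eq_sym subr_eq addrC mulrCA.
split => [relU | relF].
  apply/rowP => k; case: (mxtens_indexP k) => x y.
  by have := relE x y x 0; rewrite relU eqxx mul1r subr0 mxE => <-; rewrite mxE.
apply/matrixP => k l.
case: (mxtens_indexP k) => x' y'; case: (mxtens_indexP l) => x y.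
by rewrite relE relF !mxE mulr0.
Qed.

Lemma min_oracle_relations M K (f : 'I_K -> 'I_M -> 'I_M) (c : 'rV[C]_K) :
  \sum_j c 0 j *: min_oracle R (f j) = 0 <-> c *m graph_mx f = 0.
Proof.
have relE a b : (\sum_j c 0 j *: min_oracle R (f j)) a b =
    (c *m graph_mx f) 0 (mxtens_index (b, a)).
  rewrite summxE [(c *m _) _ _]mxE; apply: eq_bigr => j _.
  by rewrite mxE min_oracleE graph_mxE eq_sym.
split => [relQ | relF].
  by apply/rowP => k; case: (mxtens_indexP k) => b a; rewrite -relE relQ !mxE.
by apply/matrixP => a b; rewrite relE relF !mxE.
Qed.

End Oracles.

Theorem theorem3 (R : realType) :
  (forall (M N K : nat) (f : 'I_K -> 'I_M -> 'I_N),
      (0 < M)%N -> (0 < N)%N -> injective f ->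
      (unamb_dist (fun j => std_oracle R (f j)) <-> 0 < \det (Gamma R f)))
  /\
  (forall (M K : nat) (f : 'I_K -> 'I_M -> 'I_M),
      (0 < M)%N -> injective f -> (forall j, bijective (f j)) ->
      (unamb_dist (fun j => min_oracle R (f j)) <-> 0 < \det (Gamma R f))).
Proof.
split => [M N K f M_gt0 N_gt0 _ | M K f M_gt0 _ _].
  rewrite Gamma_graph_mx det_gram_gt0 unamb_distP ?muln_gt0 ?M_gt0 //.
  exact: lin_indep_row_free (fun c => std_oracle_relations f c N_gt0).
rewrite Gamma_graph_mx det_gram_gt0 unamb_distP //.
exact: lin_indep_row_free (min_oracle_relations f).
Qed.
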